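(* Let $c\in\mathbb{N}$, $c\ge1$, and let $F=(n_F)_{n\ge0}$ with $0_F=1$ and $n_F=c\,n$ for $n\ge1$. Then for all $1\le a\le b$, the layer $\langle\Phi_a\to\Phi_b\rangle$ of the cobweb poset of $F$ admits a tiling by blocks of type $\sigma P_{b-a+1}$.
   Context: Notation: $n_F\equiv F_n$. The cobweb poset of $F$ has, for each $s\ge1$, a level $\Phi_s$ consisting of $s_F$ distinct vertices (levels pairwise disjoint), plus a root level $\Phi_0$ with one vertex; for $x\in\Phi_i$, $y\in\Phi_j$ one has $x<y$ iff $i<j$. For $1\le a\le b$, the layer $\langle\Phi_a\to\Phi_b\rangle$ is the subposet on $\Phi_a\cup\dots\cup\Phi_b$; it has $m=b-a+1$ levels and its maximal chains form the set $\Phi_a\times\dots\times\Phi_b$. For a permutation $\sigma$ of $\{1,\dots,m\}$, a block of type $\sigma P_m$ in this layer is the subposet induced on $V_a\cup\dots\cup V_b$ where $V_{a-1+i}\subseteq\Phi_{a-1+i}$ and $|V_{a-1+i}|=\sigma(i)_F$ for $i=1,\dots,m$; its maximal chains form the set $V_a\times\dots\times V_b$. A tiling of the layer is a finite family of such blocks ($\sigma$ may vary from block to block) whose sets $V_a\times\dots\times V_b$ partition $\Phi_a\times\dots\times\Phi_b$ (pairwise max-disjoint and covering all maximal chains). *)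

From mathcomp Require Import all_boot all_fingroup.
Set Implicit Arguments. Unset Strict Implicit. Unset Printing Implicit Defensive.

(* Level Phi_s of the cobweb poset has F s vertices; we realise the vertices
   of Phi_s (for the layer <Phi_a -> Phi_b>) as the elements x of the ambient
   finite type 'I_(cobweb_bound F b) with x < F s.  The level of a vertex is
   recorded by the index of the coordinate in a chain, so levels are disjoint. *)
Definition cobweb_bound (F : nat -> nat) (b : nat) : nat := \max_(s < b.+1) F s.

Notation vtx F b := 'I_(cobweb_bound F b).

(* Number of levels m = b - a + 1; coordinate i : 'I_m corresponds to level a + i. *)
Notation nlev a b := (b - a).+1.

Definition level (F : nat -> nat) (b s : nat) : {set vtx F b} :=
  [set x : vtx F b | x < F s].

(* Maximal chains of the layer <Phi_a -> Phi_b> : Phi_a x ... x Phi_b. *)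
Definition layer_chains (F : nat -> nat) (a b : nat)
  : {set {ffun 'I_(nlev a b) -> vtx F b}} :=
  [set f : {ffun 'I_(nlev a b) -> vtx F b} | [forall i, f i \in level F b (a + i)]].

(* A block candidate: a permutation sigma of {1..m} (encoded as 'S_m on
   {0..m-1}, value sigma i + 1) and the vertex subsets V_{a+i}. *)
Definition block (F : nat -> nat) (a b : nat) : Type :=
  ('S_(nlev a b) * {ffun 'I_(nlev a b) -> {set vtx F b}})%type.

Definition is_block (F : nat -> nat) (a b : nat) (B : block F a b) : bool :=
  [forall i, (B.2 i \subset level F b (a + i)) && (#|B.2 i| == F (B.1 i).+1)].

Definition block_chains (F : nat -> nat) (a b : nat) (B : block F a b)
  : {set {ffun 'I_(nlev a b) -> vtx F b}} :=
  [set f : {ffun 'I_(nlev a b) -> vtx F b} | [forall i, f i \in B.2 i]].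

Definition is_tiling (F : nat -> nat) (a b : nat) (Bs : seq (block F a b)) : Prop :=
  [/\ forall B, B \in Bs -> is_block B,
      forall j k, j < size Bs -> k < size Bs -> j <> k ->
        forall B0 : block F a b,
          [disjoint block_chains (nth B0 Bs j) & block_chains (nth B0 Bs k)]
    & \bigcup_(B <- Bs) block_chains B = layer_chains F a b].

Definition cF (c : nat) (n : nat) : nat := if n == 0 then 1 else c * n.

From mathcomp Require Import all_boot all_fingroup zify.
Set Implicit Arguments. Unset Strict Implicit. Unset Printing Implicit Defensive.

(* A maximal chain of the layer is a point of the box Phi_a x ... x Phi_b,
   whose sides have sizes c a, c (a+1), ..., c b.  We prove, for an arbitrary
   finite index type I and a box S whose "active" sides i in A have sizes
   c k_i with k a bijection from A onto [lo, lo + n), that S is partitioned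
   into boxes whose active sides have sizes c t_i with t an injection of A
   into {1, ..., n}, the inactive sides being kept whole.  The proof is a
   double induction on n and lo: when lo > 0, the side j with the largest
   label lo + n - 1 is cut into a piece of size c (lo - 1), leaving a box of
   the same shape with labels [lo - 1, lo - 1 + n), and a piece of size c n,
   which is made inactive with the fixed label n while the other sides are
   tiled with labels [lo, lo + n - 1).  The two exact covers are glued along
   coordinate j.  For the theorem, the labels t of each tile, a permutation
   of {1, ..., m}, give the permutation sigma of the corresponding block. *)

Lemma card_set_ltn N p : p <= N -> #|[set x : 'I_N | x < p]| = p.
Proof.
move=> le_pN; have -> : [set x : 'I_N | x < p] = widen_ord le_pN @: 'I_p.
  apply/setP => x; rewrite inE; apply/idP/imsetP => [lt_xp | [y _ ->]].
    by exists (Ordinal lt_xp) => //; apply: val_inj.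
  by rewrite /= ltn_ord.
rewrite card_imset ?card_ord // => x y /(congr1 val) /= eq_xy; exact: val_inj.
Qed.

Lemma exists_subset_card (V : finType) (S : {set V}) p :
  p <= #|S| -> exists2 X : {set V}, X \subset S & #|X| = p.
Proof.
move=> le_pS; exists [set x in take p (enum S)].
  by apply/subsetP => x; rewrite inE => /mem_take; rewrite mem_enum.
by rewrite cardsE (card_uniqP _) ?take_uniq ?enum_uniq // size_takel -?cardE.
Qed.

Lemma count_le1_nth_inj (T : Type) (p : pred T) (s : seq T) x0 j k :
  count p s <= 1 -> j < size s -> k < size s ->
  p (nth x0 s j) -> p (nth x0 s k) -> j = k.
Proof.
elim: s j k => [//|x s IHs] [|j] [|k] //= le1 lt_j lt_k pj pk.
- have : has p s by apply/(has_nthP x0); exists k.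
  by rewrite has_count; move: le1; rewrite pj add1n ltnS leqn0 => /eqP ->.
- have : has p s by apply/(has_nthP x0); exists j.
  by rewrite has_count; move: le1; rewrite pk add1n ltnS leqn0 => /eqP ->.
- congr S; apply: IHs lt_j lt_k pj pk.
  by apply: leq_trans le1; rewrite leq_addl.
Qed.

Section Boxes.

Variables I V : finType.
Implicit Types (S : I -> {set V}) (X : {set V}) (f : {ffun I -> V}).
Implicit Types (Bs : seq {ffun I -> {set V}}).

Definition in_box (S : I -> {set V}) (f : {ffun I -> V}) : bool :=
  [forall i, f i \in S i].

(* The boxes Bs partition the box S: each point of S lies in exactly one of
   them, and no other point lies in any of them. *)
Definition exact_cover (S : I -> {set V}) (Bs : seq {ffun I -> {set V}}) : Prop :=
  forall f, count (fun B : {ffun I -> {set V}} => in_box B f) Bs = in_box S f.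

Definition set_side (S : I -> {set V}) (j : I) (X : {set V}) : I -> {set V} :=
  fun i => if i == j then X else S i.

Lemma in_box_set_side S j X f :
  X \subset S j -> in_box (set_side S j X) f = (f j \in X) && in_box S f.
Proof.
rewrite /in_box /set_side => sub_XS; apply/forallP/andP => [in_f | [fX in_f] i].
  split; first by have := in_f j; rewrite eqxx.
  by apply/forallP => i; have := in_f i; case: eqP => [-> /(subsetP sub_XS)|].
by case: eqP => [-> //|_]; apply: (forallP in_f).
Qed.

Lemma exact_cover_cut S j X Bs1 Bs2 :
  X \subset S j ->
  exact_cover (set_side S j X) Bs1 ->
  exact_cover (set_side S j (S j :\: X)) Bs2 ->
  exact_cover S (Bs1 ++ Bs2).
Proof.
move=> sub_XS cov1 cov2 f; rewrite count_cat cov1 cov2.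
rewrite !in_box_set_side ?subsetDl // in_setD.
case in_f: (in_box S f); last by rewrite !andbF.
by rewrite (forallP in_f j) !andbT; case: (f j \in X).
Qed.

Lemma exact_cover_nth_inj S Bs B0 f j k :
  exact_cover S Bs -> j < size Bs -> k < size Bs ->
  in_box (nth B0 Bs j) f -> in_box (nth B0 Bs k) f -> j = k.
Proof.
move=> cov; apply: (count_le1_nth_inj (p := fun B : {ffun I -> {set V}} => in_box B f)).
by rewrite cov; case: (in_box S f).
Qed.

Lemma exact_cover_has S Bs f :
  exact_cover S Bs -> has (fun B : {ffun I -> {set V}} => in_box B f) Bs = in_box S f.
Proof. by move=> cov; rewrite has_count cov; case: (in_box S f). Qed.

End Boxes.

Section LabelledTiles.

Variables (I V : finType) (c : nat).
Implicit Types (S : I -> {set V}) (A : {set I}) (k : I -> nat) (X Y : {set V}).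

Definition ltile : Type := ({ffun I -> nat} * {ffun I -> {set V}})%type.

Definition admissible A m S (t : ltile) : Prop :=
  [/\ {in A, forall i, t.2 i \subset S i /\ #|t.2 i| = c * t.1 i},
      {in A, forall i, 0 < t.1 i <= m},
      {in A &, injective t.1}
    & forall i, i \notin A -> t.2 i = S i].

Definition tiling A m S (Ts : seq ltile) : Prop :=
  {in Ts, forall t, admissible A m S t} /\ exact_cover S (map snd Ts).

Definition labels_onto A k lo n : Prop :=
  [/\ {in A, forall i, lo <= k i < lo + n},
      {in A &, injective k}
    & forall l, lo <= l < lo + n -> exists2 i, i \in A & k i = l].

Lemma labels_onto_drop_top A k lo n j :
  labels_onto A k lo n.+1 -> j \in A -> k j = lo + n ->
  labels_onto (A :\ j) k lo n.
Proof.
move=> [range inj onto] jA kj; split.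
- move=> i /setD1P [ij iA]; have := range i iA.
  have : k i != k j by apply: contra ij => /eqP /inj ->.
  by rewrite kj; lia.
- by move=> i i' /setD1P [_ iA] /setD1P [_ i'A]; apply: inj.
- move=> l /andP [lo_l l_top]; have [|i iA ki] := onto l; first lia.
  exists i => //; apply/setD1P; split => //; apply/eqP => ij.
  by move: l_top; rewrite -ki ij kj ltnn.
Qed.

Lemma labels_onto_lower_top A k lo n j :
  labels_onto A k lo.+1 n -> j \in A -> k j = lo + n ->
  labels_onto A (fun i => if i == j then lo else k i) lo n.
Proof.
move=> [range inj onto] jA kj; split.
- move=> i iA; case: eqP => [_|ij]; first by have := range j jA; lia.
  have := range i iA; have : k i != k j by apply/eqP => /inj ki; apply/ij/ki.
  by rewrite kj; lia.
- move=> i i' iA i'A; case: eqP => [->|ij]; case: eqP => [->|i'j] // eq_k.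
  + by have := range i' i'A; lia.
  + by have := range i iA; lia.
  + exact: inj.
- move=> l /andP [lo_l l_top]; have [->|l_lo] := eqVneq l lo.
    by exists j; rewrite ?eqxx.
  have [|i iA ki] := onto l; first lia.
  exists i => //; case: eqP => [ij|//].
  by move: l_top; rewrite -ki ij kj; lia.
Qed.

Lemma admissible_set_side A m S j X t :
  j \in A -> X \subset S j ->
  admissible A m (set_side S j X) t -> admissible A m S t.
Proof.
move=> jA sub_XS [sides labels inj inactive]; split => // i iA.
  have [sub_ti card_ti] := sides i iA; split => //; apply: subset_trans sub_ti _.
  by rewrite /set_side; case: eqP => [->|].
rewrite inactive // /set_side; case: eqP => // ij.
by move: iA; rewrite ij jA.
Qed.

Definition relabel j l (t : ltile) : ltile :=
  ([ffun i => if i == j then l else t.1 i], t.2).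

Lemma admissible_relabel A m S j Y t :
  j \in A -> Y \subset S j -> #|Y| = c * m.+1 ->
  admissible (A :\ j) m (set_side S j Y) t ->
  admissible A m.+1 S (relabel j m.+1 t).
Proof.
move=> jA sub_YS card_Y [sides labels inj inactive].
have tj : t.2 j = Y by rewrite inactive ?setD11 // /set_side eqxx.
have active i : i \in A -> i != j -> i \in A :\ j by move=> iA ij; apply/setD1P.
split => [i iA | i iA | i i' iA i'A | i iA] /=; rewrite ?ffunE.
- case: eqP => [->|/eqP ij]; first by rewrite tj.
  by have := sides i (active i iA ij); rewrite /set_side (negbTE ij).
- case: eqP => [_|/eqP ij]; first by rewrite leqnn.
  by have := labels i (active i iA ij); lia.
- case: eqP => [->|/eqP ij]; case: eqP => [->|/eqP i'j] // eq_t.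
  + by have := labels i' (active i' i'A i'j); lia.
  + by have := labels i (active i iA ij); lia.
  + exact: inj (active i iA ij) (active i' i'A i'j) eq_t.
- have ij : i != j by apply: contraNneq iA => ->.
  by rewrite inactive ?in_setD1 ?(negbTE iA) ?andbF // /set_side (negbTE ij).
Qed.

Lemma tiling_no_active S m :
  tiling set0 m S [:: ([ffun i => 0], [ffun i => S i])].
Proof.
split=> [t | f]; last first.
  by rewrite /= addn0; congr (nat_of_bool _); apply: eq_forallb => i; rewrite ffunE.
by rewrite mem_seq1 => /eqP ->; split => [i | i | i | i _]; rewrite ?inE ?ffunE.
Qed.

Lemma tiling_empty_side A m S j :
  S j = set0 -> tiling A m S [::].
Proof.
move=> Sj0; split=> // f; rewrite /in_box; case: forallP => // /(_ j).
by rewrite Sj0 inE.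
Qed.

Lemma tiling_glue A m S j X Ts1 Ts2 :
  j \in A -> X \subset S j -> #|S j :\: X| = c * m.+1 ->
  tiling A m.+1 (set_side S j X) Ts1 ->
  tiling (A :\ j) m (set_side S j (S j :\: X)) Ts2 ->
  tiling A m.+1 S (Ts1 ++ map (relabel j m.+1) Ts2).
Proof.
move=> jA sub_XS card_Y [adm1 cov1] [adm2 cov2]; split.
  move=> t; rewrite mem_cat => /orP [/adm1 | /mapP [t' /adm2 adm' ->]].
    exact: admissible_set_side.
  exact: admissible_relabel (subsetDl _ _) card_Y adm'.
rewrite map_cat -map_comp; apply: exact_cover_cut sub_XS cov1 _.
by rewrite (@eq_map _ _ _ snd).
Qed.

Lemma tiling_exists n : forall lo A S k,
  {in A, forall i, #|S i| = c * k i} -> labels_onto A k lo n ->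
  exists Ts, tiling A n S Ts.
Proof.
elim: n => [|n IHn] lo A S k card_S onto.
  have -> : A = set0.
    have [range _ _] := onto.
    by apply/setP => i; rewrite inE; apply/negP => /range; lia.
  by eexists; apply: tiling_no_active.
elim: lo A S k card_S onto => [|lo IHlo] A S k card_S onto.
  have [_ _ hit] := onto; have [j jA kj] := hit 0 isT.
  exists [::]; apply: (tiling_empty_side _ _ (j := j)).
  by apply/eqP; rewrite -cards_eq0 card_S // kj muln0.
have [j jA kj] : exists2 j, j \in A & k j = lo + n.+1.
  by have [_ _ hit] := onto; apply: hit; lia.
have le_lo_Sj : c * lo <= #|S j| by rewrite card_S // kj leq_mul2l leq_addr orbT.
have [X sub_XS card_X] := exists_subset_card le_lo_Sj.
have card_Y : #|S j :\: X| = c * n.+1.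
  by rewrite cardsDS // card_S // card_X kj mulnDr addKn.
have [Ts1 tiling1] : exists Ts, tiling A n.+1 (set_side S j X) Ts.
  apply: IHlo (labels_onto_lower_top onto jA kj) => i iA.
  by rewrite /set_side; case: eqP; rewrite ?card_X ?card_S.
have [Ts2 tiling2] : exists Ts, tiling (A :\ j) n (set_side S j (S j :\: X)) Ts.
  apply: (IHn lo.+1 _ _ k) => [i /setD1P [/negbTE ij iA]|].
    by rewrite /set_side ij card_S.
  by apply: labels_onto_drop_top onto jA _; rewrite kj addSnnS.
by eexists; apply: tiling_glue jA sub_XS card_Y tiling1 tiling2.
Qed.

End LabelledTiles.

(* The permutation s of 'I_M with s i = tau i - 1, for an injection tau of
   'I_M into {1, ..., M}; the identity if there is none. *)
Definition perm_of_labels M (tau : 'I_M -> nat) : 'S_M :=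
  odflt 1%g [pick s : 'S_M | [forall i, (s i : nat) == (tau i).-1]].

Lemma perm_of_labelsE M (tau : 'I_M -> nat) :
  (forall i, 0 < tau i <= M) -> injective tau ->
  forall i, (perm_of_labels tau i).+1 = tau i.
Proof.
move=> range inj_tau; have pos i : (tau i).-1.+1 = tau i.
  by have := range i; case: (tau i).
rewrite /perm_of_labels; case: pickP => [s /forallP s_tau i | no_perm].
  by rewrite (eqP (s_tau i)).
have lt_tau i : (tau i).-1 < M by rewrite pos; have /andP [] := range i.
pose f i := Ordinal (lt_tau i).
have inj_f : injective f.
  by move=> i j /(congr1 val) /= /(congr1 S); rewrite !pos => /inj_tau.
by have := no_perm (perm inj_f); case/forallP => i; rewrite permE.
Qed.

Lemma card_level F b s : s <= b -> #|level F b s| = F s.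
Proof.
move=> le_sb; apply: card_set_ltn; rewrite /cobweb_bound.
have lt_sb : s < b.+1 by [].
exact: (@leq_bigmax _ (fun i : 'I_b.+1 => F i) (Ordinal lt_sb)).
Qed.

Lemma layer_labels a b :
  labels_onto [set: 'I_(nlev a b)] (fun i => a + i) a (nlev a b).
Proof.
split=> [i _ | i j _ _ /addnI /val_inj // | l /andP [le_al lt_l]].
  by rewrite leq_addr ltn_add2l ltn_ord.
have lt_la : l - a < nlev a b by rewrite ltn_subLR.
by exists (Ordinal lt_la); rewrite ?inE //= subnKC.
Qed.

Definition block_of_tile F a b (t : ltile 'I_(nlev a b) (vtx F b)) : block F a b :=
  (perm_of_labels t.1, t.2).

Lemma is_block_of_tile c a b (t : ltile 'I_(nlev a b) (vtx (cF c) b)) :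
  admissible c [set: 'I_(nlev a b)] (nlev a b) (fun i => level (cF c) b (a + i)) t ->
  is_block (block_of_tile t).
Proof.
move=> [sides labels inj _]; apply/forallP => i /=.
have [sub_ti card_ti] := sides i (in_setT i).
have [pos_ti _] := andP (labels i (in_setT i)).
rewrite sub_ti perm_of_labelsE ?card_ti /cF ?eqn0Ngt ?pos_ti /= ?eqxx //.
- by move=> j; apply: labels; apply: in_setT.
- by move=> j k; apply: inj; apply: in_setT.
Qed.

Lemma is_tiling_of_tiling c a b (Ts : seq (ltile 'I_(nlev a b) (vtx (cF c) b))) :
  tiling c [set: 'I_(nlev a b)] (nlev a b) (fun i => level (cF c) b (a + i)) Ts ->
  is_tiling (map (@block_of_tile _ a b) Ts).
Proof.
move=> [adm cov]; split.
- by move=> B /mapP [t /adm adm_t ->]; apply: is_block_of_tile.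
- move=> j k; rewrite size_map => lt_j lt_k neq_jk B0.
  pose t0 : ltile _ _ := ([ffun=> 0], B0.2).
  rewrite disjoint_subset; apply/subsetP => f.
  rewrite !(nth_map t0) // !inE => f_j; apply/negP => f_k; apply: neq_jk.
  by apply: (exact_cover_nth_inj (B0 := B0.2) (f := f) cov);
    rewrite ?size_map ?(nth_map t0).
- apply/setP => f; have -> : (f \in layer_chains (cF c) a b) =
      in_box (fun i : 'I_(nlev a b) => level (cF c) b (a + i)) f by rewrite inE.
  rewrite bigcup_seq -(exact_cover_has _ cov) has_map.
  apply/bigcupP/hasP => [[B /mapP [t Ts_t ->] f_B] | [t Ts_t f_t]].
    by exists t; rewrite // inE in f_B.
  by exists (block_of_tile t); [exact: map_f | rewrite inE].
Qed.

Theorem mainTheorem6 (c : nat) (hc : 1 <= c) (a b : nat) (ha : 1 <= a) (hab : a <= b) :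
  exists Bs : seq (block (cF c) a b), is_tiling Bs.
Proof.
pose S (i : 'I_(nlev a b)) := level (cF c) b (a + i).
have card_S : {in [set: 'I_(nlev a b)], forall i, #|S i| = c * (a + i)}.
  move=> i _; rewrite card_level /cF; last by have := ltn_ord i; lia.
  by rewrite addn_eq0 eqn0Ngt ha.
have [Ts tiling_Ts] := tiling_exists card_S (layer_labels a b).
by exists (map (@block_of_tile _ a b) Ts); apply: is_tiling_of_tiling.
Qed.
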